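(* Let $t=0$ (so $A:L^2(\Gamma)\to L^2(\Gamma)$ with $\langle Av,v\rangle\ge\alpha\|v\|^2$ and $\|Av\|\le\beta\|v\|$), let $f\in L^2(\Gamma)$, and for $Q\in[P_0]$ let $u_Q\in S^0_Q$ be the Galerkin approximation of $u=A^{-1}f$ from $S^0_Q$ and $r_Q=f-Au_Q$. Let $P,P'\in[P_0]$ with $P\preceq P'$, and let $\Gamma^*=\mathrm{int}\bigcup_{\tau\in P\setminus P'}\overline\tau$. Then for every $v\in S^0_{P'}$, \[ \alpha\|u_P-u_{P'}\|\le\|r_P\|_{\Gamma^*}\le\beta\|u_P-u_{P'}\|+2\|r_P-v\|_{\Gamma^*}. \]
   Context: $\Omega$ is a compact closed $n$-dimensional manifold, globally $C^{\nu-1,1}$ and patchwise smooth (each smooth closed patch diffeomorphic to a polygon), and $\Gamma\subseteq\Omega$ is either $\Omega$ or a connected open subset of $\Omega$ whose boundary consists of curved polygons. $\|\cdot\|$ and $\|\cdot\|_\omega$ are the $L^2(\Gamma)$- and $L^2(\omega)$-norms, $\langle\cdot,\cdot\rangle$ the $L^2(\Gamma)$ inner product. $A:L^2(\Gamma)\to L^2(\Gamma)$ is a self-adjoint bounded linear bijection with constants $\alpha,\beta>0$ as in the claim. For a closed subspace $S$, the Galerkin approximation $u_S\in S$ is defined by $\langle Au_S,w\rangle=\langle f,w\rangle$ for all $w\in S$. A surface triangle is an open subset of $\Gamma$ whose closure is diffeomorphic to a flat triangle (its reference; polynomials, midpoints etc. are understood through the reference). A partition of $\Gamma$ is a finite set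 of pairwise disjoint surface triangles whose closures cover $\overline\Gamma$. Each triangle has a newest vertex; refining it means bisecting it by joining the newest vertex to the midpoint of the opposite edge, the two children inheriting the reference and having this midpoint as newest vertex. $P\preceq P'$ means $P'$ is obtained from $P$ by recursively replacing triangles by their children. $P_0$ is a fixed conforming partition and $[P_0]$ is the set of all its refinements. $S^0_P$ is the space of functions that are constant on each $\tau\in P$. $\mathrm{int}$ denotes the interior. *)

From HB Require Import structures.
From mathcomp Require Import all_boot all_order all_algebra.
From mathcomp Require Import all_classical all_reals all_analysis.

Set Implicit Arguments.
Unset Strict Implicit.
Unset Printing Implicit Defensive.

Import Order.TTheory GRing.Theory Num.Theory.
Local Open Scope classical_set_scope.
Local Open Scope ring_scope.

HB.structure Definition TopMeasurable d :=
  {T of Topological T & Measurable d T}.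
Notation topMeasurableType := TopMeasurable.type.

Section L2defs.
Context {d : measure_display} {T : topMeasurableType d} {R : realType}.
Variable mu : {measure set T -> \bar R}.

(* v is (a representative of) an element of L^2(Gamma). *)
Definition L2 (v : T -> R) : Prop :=
  measurable_fun setT v /\ (\int[mu]_x ((v x) ^+ 2)%:E < +oo)%E.

Definition ip (v w : T -> R) : R := Rintegral mu setT (fun x => v x * w x).

Definition normL2 (omega : set T) (v : T -> R) : R :=
  Num.sqrt (Rintegral mu omega (fun x => (v x) ^+ 2)).

(* equality almost everywhere, i.e. equality in L^2(Gamma) *)
Definition aeeq (v w : T -> R) : Prop := {ae mu, forall x, v x = w x}.

Definition S0 (Tri : eqType) (cell : Tri -> set T) (P : seq Tri) (v : T -> R)
  : Prop :=
  L2 v /\ forall t, t \in P -> exists c : R, forall x, cell t x -> v x = c.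

End L2defs.

(* P <= P' : P' is obtained from P by recursively replacing triangles by
   their two children (newest vertex bisection: ch1 t, ch2 t). *)
Inductive refines (Tri : eqType) (ch1 ch2 : Tri -> Tri) : seq Tri -> seq Tri -> Prop :=
| refines_refl P : refines ch1 ch2 P P
| refines_step P P' t : refines ch1 ch2 P P' -> t \in P' ->
    refines ch1 ch2 P (ch1 t :: ch2 t :: rem t P').

Definition Gamma_star (T : topologicalType) (Tri : eqType) (cell : Tri -> set T)
  (P P' : seq Tri) : set T :=
  interior [set x | exists2 t, (t \in P) && (t \notin P') & closure (cell t) x].

Definition is_partition (T : topologicalType) (Tri : eqType) (cell : Tri -> set T)
  (P : seq Tri) : Prop :=
  uniq P /\
  (forall t s, t \in P -> s \in P -> t != s -> cell t `&` cell s = set0) /\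
  (forall x, exists2 t, t \in P & closure (cell t) x).

From HB Require Import structures.
From mathcomp Require Import all_boot all_order all_algebra.
From mathcomp Require Import all_classical all_reals all_analysis.
From mathcomp Require Import ring lra measurable_realfun.
Import Order.TTheory GRing.Theory Num.Theory.
Local Open Scope classical_set_scope.

(* Write e := u_P - u_P', which lies in S^0_P'.  Cutting e off outside Gamma^*
   gives a function of S^0_P (cells of P \ P' lie in Gamma^*, on the other
   cells of P the function e is constant), so Galerkin orthogonality of u_P
   on S^0_P and of u_P' on S^0_P' yields
     alpha ||e||^2 <= <A e, e> = - <r_P, e> = - <r_P, e>_{Gamma^*},
   and Cauchy-Schwarz gives the lower bound.  Likewise v 1_{Gamma^*} lies in
   S^0_P', whence |<r_P, v>_{Gamma^*}| = |<A e, v 1_{Gamma^*}>|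
   <= beta ||e|| ||v||_{Gamma^*}; writing ||r_P||^2_{Gamma^*} =
   <r_P, v>_{Gamma^*} + <r_P, r_P - v>_{Gamma^*} and
   ||v||_{Gamma^*} <= ||r_P||_{Gamma^*} + ||r_P - v||_{Gamma^*}, a quadratic
   inequality in ||r_P||_{Gamma^*} gives the upper bound. *)

Section Refinement.
Context {T : topologicalType} {Tri : eqType} (cell : Tri -> set T).

(* A refinement may produce repeated triangles (a child can coincide with a
   triangle already present), so instead of [uniq] we require repeated
   triangles to have empty cells. *)
Definition disjoint_cells (P : seq Tri) :=
  (forall a b, a \in P -> b \in P -> a != b -> cell a `&` cell b = set0) /\
  (forall a, (1 < count_mem a P)%N -> cell a = set0).

Lemma partition_disjoint_cells P : is_partition cell P -> disjoint_cells P.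
Proof.
case=> uP [dj _]; split => // a; rewrite count_uniq_mem //.
by case: (a \in P).
Qed.

Variables ch1 ch2 : Tri -> Tri.

Lemma mem_bisect (P : seq Tri) t a : a \in ch1 t :: ch2 t :: rem t P ->
  [\/ a = ch1 t, a = ch2 t | a \in rem t P].
Proof.
rewrite !in_cons => /orP[/eqP->|/orP[/eqP->|]]; by [constructor 1|constructor 2|constructor 3].
Qed.

Hypothesis ch_sub1 : forall t, cell (ch1 t) `<=` cell t.
Hypothesis ch_sub2 : forall t, cell (ch2 t) `<=` cell t.

Lemma refines_cell_sub P P' : refines ch1 ch2 P P' ->
  forall a, a \in P' -> exists2 b, b \in P & cell a `<=` cell b.
Proof.
elim=> [Q a aQ|Q Q' t _ IH tQ a /mem_bisect[->|->|ar]]; first by exists a.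
- by have [b bQ stb] := IH t tQ; exists b => //; apply: subset_trans stb.
- by have [b bQ stb] := IH t tQ; exists b => //; apply: subset_trans stb.
- exact: IH (mem_rem ar).
Qed.

Hypothesis ch_disj : forall t, cell (ch1 t) `&` cell (ch2 t) = set0.

Lemma disjoint_cells_bisect P t : disjoint_cells P -> t \in P ->
  disjoint_cells (ch1 t :: ch2 t :: rem t P).
Proof.
move=> [dj cnt] tP.
have countE a : count_mem a P = ((t == a) + count_mem a (rem t P))%N.
  by move/permP: (perm_to_rem tP) => ->.
have sub0 (A B : set T) : A `<=` B -> B = set0 -> A = set0.
  by move=> AB B0; apply/seteqP; split => // x /AB; rewrite B0.
have t_rem : t \in rem t P -> cell t = set0.
  move=> tr; apply: cnt; rewrite countE eqxx add1n ltnS.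
  by rewrite -has_count has_pred1.
have child_rem c b : c = ch1 t \/ c = ch2 t -> b \in rem t P ->
    cell c `&` cell b = set0.
  move=> hc br; have ct : cell c `<=` cell t by case: hc => ->.
  have [bt|bt] := eqVneq b t.
    by rewrite bt in br *; apply: (sub0 _ _ _ (t_rem br)) => x [].
  apply: (sub0 _ (cell t `&` cell b)); first by move=> x [/ct].
  by apply: dj => //; [exact: mem_rem br|rewrite eq_sym].
split.
- move=> a b /mem_bisect ha /mem_bisect hb ab.
  case: ha => [ea|ea|ar]; case: hb => [eb|eb|br].
  + by move: ab; rewrite ea eb eqxx.
  + by rewrite ea eb.
  + by apply: child_rem => //; left.
  + by rewrite ea eb setIC.
  + by move: ab; rewrite ea eb eqxx.
  + by apply: child_rem => //; right.
  + by rewrite setIC; apply: child_rem => //; left.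
  + by rewrite setIC; apply: child_rem => //; right.
  + exact: dj (mem_rem ar) (mem_rem br) ab.
- move=> a /=; have [ra|ra] := leqP 2 (count_mem a (rem t P)).
    by move=> _; apply: cnt; rewrite countE (leq_trans ra) ?leq_addl.
  have ar : (0 < count_mem a (rem t P))%N -> a \in rem t P.
    by rewrite -has_count has_pred1.
  have [e1|n1] := eqVneq (ch1 t) a; have [e2|n2] := eqVneq (ch2 t) a.
  + by move=> _; rewrite -(ch_disj t) e1 e2 setIid.
  + rewrite /= add0n add1n ltnS => /ar.
    by move/(child_rem a a (or_introl (esym e1))); rewrite setIid.
  + rewrite /= add1n add0n ltnS => /ar.
    by move/(child_rem a a (or_intror (esym e2))); rewrite setIid.
  + by rewrite /= !add0n => /(leq_trans ra); rewrite ltnn.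
Qed.

Lemma refines_disjoint_cells P P' : refines ch1 ch2 P P' ->
  disjoint_cells P -> disjoint_cells P'.
Proof. by elim=> // Q Q' t _ IH tQ /IH dQ; exact: disjoint_cells_bisect dQ tQ. Qed.

Hypothesis cell_open : forall t, open (cell t).

Lemma cell_sub_Gamma_star P P' t : t \in P -> t \notin P' ->
  cell t `<=` Gamma_star cell P P'.
Proof.
move=> tP tP' x xt; apply: (@filterS _ _ _ (cell t)).
  by move=> y yt; exists t; [rewrite tP tP'|exact: subset_closure].
exact: open_nbhs_nbhs.
Qed.

Lemma cell_Gamma_star_disjoint P P' s x : disjoint_cells P ->
  s \in P -> s \in P' -> cell s x -> ~ Gamma_star cell P P' x.
Proof.
move=> [dj _] sP sP' xs /interior_subset [t /andP[tP tP'] cl].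
have st : s != t by apply: contraNneq tP' => <-.
have [y [yt ys]] := cl (cell s) (open_nbhs_nbhs (conj (cell_open s) xs)).
by have : (cell s `&` cell t) y by []; rewrite (dj _ _ sP tP st).
Qed.

End Refinement.

Arguments partition_disjoint_cells {T Tri cell P}.
Arguments refines_cell_sub {T Tri cell ch1 ch2} _ _ {P P'} _ {a}.
Arguments refines_disjoint_cells {T Tri cell ch1 ch2} _ _ _ {P P'}.
Arguments cell_sub_Gamma_star {T Tri cell} _ {P P' t}.
Arguments cell_Gamma_star_disjoint {T Tri cell} _ {P P' s x}.

Local Open Scope ring_scope.

Section L2.
Context {d : measure_display} {T : topMeasurableType d} {R : realType}.
Variable mu : {measure set T -> \bar R}.
Implicit Types (g h : T -> R) (D : set T) (a : R).

Local Notation integrableR D g := (mu.-integrable D (EFin \o g)).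

Lemma L2_measurable {g} : L2 mu g -> measurable_fun setT g.
Proof. by case. Qed.

Lemma L2_integrable_sqrT {g} : L2 mu g -> integrableR setT (fun x => g x ^+ 2).
Proof.
case=> mg fin; apply/integrableP; split.
  by apply/measurable_EFinP; exact: measurable_funX.
rewrite (le_lt_trans _ fin)// le_eqVlt; apply/orP; left; apply/eqP.
by apply: eq_integral => x _ /=; rewrite ger0_norm// sqr_ge0.
Qed.

Lemma integrable_sqr_L2 g : measurable_fun setT g ->
  integrableR setT (fun x => g x ^+ 2) -> L2 mu g.
Proof.
move=> mg /integrableP[_ fin]; split=> //.
rewrite (le_lt_trans _ fin)// le_eqVlt; apply/orP; left; apply/eqP.
by apply: eq_integral => x _ /=; rewrite ger0_norm// sqr_ge0.
Qed.

Lemma integrableR_le {D g h} : measurable D -> measurable_fun D g ->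
  integrableR D h -> (forall x, D x -> `|g x| <= `|h x|) -> integrableR D g.
Proof.
move=> mD mg ih gh; apply: (le_integrable mD _ _ ih); first exact/measurable_EFinP.
by move=> x Dx /=; rewrite lee_fin; exact: gh.
Qed.

Lemma integrableR_lin {D} a {g h} : measurable D ->
  integrableR D g -> integrableR D h -> integrableR D (fun x => a * g x + h x).
Proof.
move=> mD ig ih; have := integrableD mD (integrableZl mD a ig) ih.
by apply: eq_integrable => // x _ /=; rewrite EFinD EFinM.
Qed.

Lemma Rintegral_lin D a g h : measurable D ->
  integrableR D g -> integrableR D h ->
  Rintegral mu D (fun x => a * g x + h x) =
  a * Rintegral mu D g + Rintegral mu D h.
Proof.
move=> mD ig ih; rewrite RintegralD// ?RintegralZl//.
by have := integrableZl mD a ig; apply: eq_integrable => // x _ /=; rewrite EFinM.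
Qed.

Lemma L2_le {g h} : L2 mu g -> measurable_fun setT h ->
  (forall x, `|h x| <= `|g x|) -> L2 mu h.
Proof.
move=> Lg mh hg; apply: integrable_sqr_L2 => //.
apply: (integrableR_le (h := fun x => g x ^+ 2)).
- by [].
- exact: measurable_funX.
- exact: L2_integrable_sqrT.
- by move=> x _; rewrite !normrX lerXn2r ?nnegrE ?normr_ge0.
Qed.

Lemma L2_integrable_mulT {g h} : L2 mu g -> L2 mu h ->
  integrableR setT (fun x => g x * h x).
Proof.
move=> Lg Lh; apply: (integrableR_le (h := fun x => 1 * g x ^+ 2 + h x ^+ 2)).
- by [].
- by apply: measurable_funM; exact: L2_measurable.
- by apply: integrableR_lin => //; exact: L2_integrable_sqrT.
- move=> x _; rewrite mul1r [leRHS]ger0_norm ?addr_ge0 ?sqr_ge0//.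
  by have [?|?] := lerP 0 (g x * h x); [rewrite ger0_norm|rewrite ltr0_norm]; nra.
Qed.

Lemma L2_integrable_mul {D g h} : measurable D -> L2 mu g -> L2 mu h ->
  integrableR D (fun x => g x * h x).
Proof. by move=> mD Lg Lh; apply: (integrableS measurableT) => //; exact: L2_integrable_mulT. Qed.

Lemma L2_integrable_sqr {D g} : measurable D -> L2 mu g ->
  integrableR D (fun x => g x ^+ 2).
Proof. by move=> mD Lg; apply: (integrableS measurableT) => //; exact: L2_integrable_sqrT. Qed.

Lemma L2_lin a {g h} : L2 mu g -> L2 mu h -> L2 mu (fun x => a * g x + h x).
Proof.
move=> Lg Lh; have mgh : measurable_fun setT (fun x => a * g x + h x).
  by apply: measurable_funD; [apply: measurable_funM|]; rewrite //; exact: L2_measurable.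
apply: integrable_sqr_L2 => //.
apply: (integrableR_le (h := fun x => (2 * a ^+ 2) * g x ^+ 2 + 2 * h x ^+ 2)).
- by [].
- exact: measurable_funX.
- apply: integrableR_lin => //; first exact: L2_integrable_sqrT.
  have := integrableR_lin 2 measurableT (L2_integrable_sqrT Lh)
    (@integrable0 _ _ _ mu setT).
  by apply: eq_integrable => // x _ /=; rewrite addr0.
- move=> x _; rewrite !ger0_norm ?sqr_ge0//.
    by rewrite -subr_ge0 (_ : _ - _ = (a * g x - h x) ^+ 2) ?sqr_ge0//; ring.
  exact: addr_ge0 (mulr_ge0 (mulr_ge0 (ler0n _ 2) (sqr_ge0 a)) (sqr_ge0 _)) (mulr_ge0 (ler0n _ 2) (sqr_ge0 _)).
Qed.

Lemma L2_sub {g h} : L2 mu g -> L2 mu h -> L2 mu (fun x => g x - h x).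
Proof.
move=> Lg Lh; have := L2_lin (-1) Lh Lg.
by congr L2; apply/funext => x; ring.
Qed.

Lemma L2_mul_indic {D h} : measurable D -> L2 mu h ->
  L2 mu (fun x => h x * \1_D x).
Proof.
move=> mD Lh; apply: (L2_le Lh).
  by apply: measurable_funM; [exact: L2_measurable|exact: measurable_indic].
by move=> x; rewrite normrM indicE; case: (x \in D); rewrite ?normr1 ?normr0 ?mulr1 ?mulr0.
Qed.

Lemma L2_mul_indicC {D h} : measurable D -> L2 mu h ->
  L2 mu (fun x => h x * (1 - \1_D x)).
Proof.
move=> mD Lh; have := L2_sub Lh (L2_mul_indic mD Lh).
by congr L2; apply/funext => x; ring.
Qed.

Lemma normL2_ge0 D h : 0 <= normL2 mu D h.
Proof. exact: sqrtr_ge0. Qed.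

Lemma normL2_sqr D h : normL2 mu D h ^+ 2 = Rintegral mu D (fun x => h x ^+ 2).
Proof. by rewrite sqr_sqrtr//; apply: Rintegral_ge0 => x _; exact: sqr_ge0. Qed.

Lemma Rintegral_mul_indic D h :
  Rintegral mu setT (fun x => h x * \1_D x) = Rintegral mu D h.
Proof.
rewrite [RHS]Rintegral_mkcond; apply: eq_Rintegral => x _.
by rewrite patchE indicE; case: (x \in D); rewrite ?mulr1 ?mulr0.
Qed.

Lemma normL2_mul_indic D h : normL2 mu setT (fun x => h x * \1_D x) = normL2 mu D h.
Proof.
rewrite /normL2 -[in RHS]Rintegral_mul_indic; congr Num.sqrt; apply: eq_Rintegral => x _.
by rewrite indicE; case: (x \in D); rewrite ?mulr1 ?mulr0 ?expr0n ?mul0r.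
Qed.

Lemma Rintegral_cauchy_schwarz {D g h} : measurable D -> L2 mu g -> L2 mu h ->
  `|Rintegral mu D (fun x => g x * h x)| <= normL2 mu D g * normL2 mu D h.
Proof.
move=> mD Lg Lh.
set a := Rintegral mu D (fun x => g x ^+ 2).
set b := Rintegral mu D (fun x => g x * h x).
set c := Rintegral mu D (fun x => h x ^+ 2).
have a0 : 0 <= a by apply: Rintegral_ge0 => x _; exact: sqr_ge0.
have c0 : 0 <= c by apply: Rintegral_ge0 => x _; exact: sqr_ge0.
have quad s : 0 <= s ^+ 2 * a + (- (2 * s) * b + c).
  have := Rintegral_ge0 mu (D := D) (fun x _ => sqr_ge0 (s * g x - h x)).
  rewrite (@eq_Rintegral _ _ _ mu D
    (fun x => s ^+ 2 * g x ^+ 2 + (- (2 * s) * (g x * h x) + h x ^+ 2))).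
    by rewrite !Rintegral_lin ?integrableR_lin ?L2_integrable_sqr ?L2_integrable_mul.
  by move=> x _; ring.
suff : b ^+ 2 <= a * c.
  by move=> bac; rewrite /normL2 -sqrtrM// -sqrtr_sqr ler_wsqrtr.
have [a_eq0|a_neq0] := eqVneq a 0.
  rewrite a_eq0 mul0r; have [->|b_neq0] := eqVneq b 0; first by rewrite expr0n.
  have := quad ((c + 1) / (2 * b)); rewrite a_eq0 mulr0 add0r.
  by rewrite (_ : - _ * b + c = -1) ?ler0N1//; field.
have a_gt0 : 0 < a by rewrite lt_def a_neq0 a0.
have := quad (b / a).
rewrite (_ : _ + _ = (a * c - b ^+ 2) / a); last by field.
by rewrite pmulr_lge0 ?invr_gt0// subr_ge0.
Qed.

Lemma normL2_sub_le {D g h} : measurable D -> L2 mu g -> L2 mu h ->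
  normL2 mu D (fun x => g x - h x) <= normL2 mu D g + normL2 mu D h.
Proof.
move=> mD Lg Lh.
rewrite -[leRHS]ger0_norm ?addr_ge0 ?normL2_ge0// -sqrtr_sqr ler_wsqrtr//.
rewrite (@eq_Rintegral _ _ _ mu D
  (fun x => 1 * g x ^+ 2 + (-2 * (g x * h x) + h x ^+ 2))); last by move=> x _; ring.
rewrite !Rintegral_lin ?integrableR_lin ?L2_integrable_sqr ?L2_integrable_mul//.
rewrite -!normL2_sqr mul1r.
have := Rintegral_cauchy_schwarz mD Lg Lh; rewrite ler_norml => /andP[? ?].
lra.
Qed.

Lemma normL2_le_setT {D h} : measurable D -> L2 mu h ->
  normL2 mu D h <= normL2 mu setT h.
Proof.
move=> mD Lh; rewrite -normL2_mul_indic ler_wsqrtr// le_Rintegral//.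
- by have := L2_integrable_sqrT (L2_mul_indic mD Lh).
- exact: L2_integrable_sqrT.
- by move=> x _; rewrite indicE; case: (x \in D); rewrite ?mulr1 ?mulr0 ?expr0n ?sqr_ge0.
Qed.

Lemma ip_ae {g1 g2 h} : aeeq mu g1 g2 -> L2 mu g1 -> L2 mu g2 -> L2 mu h ->
  ip mu g1 h = ip mu g2 h.
Proof.
move=> g12 Lg1 Lg2 Lh; congr fine; apply: ae_eq_integral => //.
- by apply/measurable_EFinP/measurable_funM; exact: L2_measurable.
- by apply/measurable_EFinP/measurable_funM; exact: L2_measurable.
- by apply: filterS g12 => x /= -> _.
Qed.

Lemma ip_linl a {g h w} : L2 mu g -> L2 mu h -> L2 mu w ->
  ip mu (fun x => a * g x + h x) w = a * ip mu g w + ip mu h w.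
Proof.
move=> Lg Lh Lw; rewrite /ip -Rintegral_lin ?L2_integrable_mul//.
by apply: eq_Rintegral => x _; ring.
Qed.

Lemma ip_subl {g h w} : L2 mu g -> L2 mu h -> L2 mu w ->
  ip mu (fun x => g x - h x) w = ip mu g w - ip mu h w.
Proof.
move=> Lg Lh Lw; rewrite addrC -mulN1r -ip_linl//.
by congr ip; apply/funext => x; ring.
Qed.

Lemma ip_linear_subl (A : (T -> R) -> T -> R) {u u' w} :
  (forall g, L2 mu g -> L2 mu (A g)) ->
  (forall a g h, L2 mu g -> L2 mu h ->
    aeeq mu (A (fun x => a * g x + h x)) (fun x => a * A g x + A h x)) ->
  L2 mu u -> L2 mu u' -> L2 mu w ->
  ip mu (A (fun x => u x - u' x)) w = ip mu (A u) w - ip mu (A u') w.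
Proof.
move=> A_L2 A_lin Lu Lu' Lw.
have [LAu LAu'] := (A_L2 _ Lu, A_L2 _ Lu').
have -> : (fun x => u x - u' x) = (fun x => -1 * u' x + u x).
  by apply/funext => x; ring.
rewrite (ip_ae (A_lin _ _ _ Lu' Lu) (A_L2 _ (L2_lin _ Lu' Lu)) (L2_lin _ LAu' LAu) Lw).
by rewrite (ip_linl _ LAu' LAu Lw) mulN1r addrC.
Qed.

Lemma ip_mul_indic D r w :
  ip mu r (fun x => w x * \1_D x) = Rintegral mu D (fun x => r x * w x).
Proof. by rewrite -Rintegral_mul_indic; apply: eq_Rintegral => x _; rewrite mulrA. Qed.

Lemma ip_split_indic {D r w} : measurable D -> L2 mu r -> L2 mu w ->
  ip mu r w = Rintegral mu D (fun x => r x * w x) + ip mu r (fun x => w x * (1 - \1_D x)).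
Proof.
move=> mD Lr Lw; have LwD := L2_mul_indic mD Lw; have LwC := L2_mul_indicC mD Lw.
rewrite -ip_mul_indic /ip -[X in X + _]mul1r -Rintegral_lin ?L2_integrable_mul//.
by apply: eq_Rintegral => x _; ring.
Qed.

Lemma coercive_bound {D alpha r e} : measurable D -> 0 < alpha ->
  L2 mu r -> L2 mu e ->
  alpha * normL2 mu setT e ^+ 2 <= `|Rintegral mu D (fun x => r x * e x)| ->
  alpha * normL2 mu setT e <= normL2 mu D r.
Proof.
move=> mD alpha_gt0 Lr Le coer.
have n_ge0 := normL2_ge0 setT e.
have bnd : alpha * normL2 mu setT e ^+ 2 <= normL2 mu D r * normL2 mu setT e.
  apply: (le_trans coer); apply: (le_trans (Rintegral_cauchy_schwarz mD Lr Le)).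
  by rewrite ler_wpM2l ?normL2_ge0 ?normL2_le_setT.
have [->|n_neq0] := eqVneq (normL2 mu setT e) 0; first by rewrite mulr0 normL2_ge0.
have n_gt0 : 0 < normL2 mu setT e by rewrite lt_def n_neq0.
by rewrite -(ler_pM2r n_gt0) -mulrA -expr2.
Qed.

Lemma residual_bound {D E r v} : measurable D -> 0 <= E -> L2 mu r -> L2 mu v ->
  `|Rintegral mu D (fun x => r x * v x)| <= E * normL2 mu D v ->
  normL2 mu D r <= E + 2 * normL2 mu D (fun x => r x - v x).
Proof.
move=> mD E_ge0 Lr Lv rv_le.
have Lrv := L2_sub Lr Lv.
have sqrE : normL2 mu D r ^+ 2 = Rintegral mu D (fun x => r x * v x)
    + Rintegral mu D (fun x => r x * (r x - v x)).
  rewrite normL2_sqr -[X in X + _]mul1r -Rintegral_lin ?L2_integrable_mul//.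
  by apply: eq_Rintegral => x _; ring.
have cs := Rintegral_cauchy_schwarz mD Lr Lrv.
have tri : normL2 mu D v <= normL2 mu D r + normL2 mu D (fun x => r x - v x).
  have := normL2_sub_le mD Lr Lrv.
  by rewrite (_ : (fun x => r x - (r x - v x)) = v) //; apply/funext => x; ring.
move: rv_le cs; rewrite !ler_norml => /andP[_ rv] /andP[_ rrv].
have := normL2_ge0 D r; have := normL2_ge0 D (fun x => r x - v x).
have := normL2_ge0 D v.
nra.
Qed.

End L2.

Section PiecewiseConstant.
Context {d : measure_display} {T : topMeasurableType d} {R : realType}.
Variable mu : {measure set T -> \bar R}.
Context {Tri : eqType} (cell : Tri -> set T).
Implicit Types (P : seq Tri) (u w : T -> R).

Lemma S0_sub P u w : S0 mu cell P u -> S0 mu cell P w ->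
  S0 mu cell P (fun x => u x - w x).
Proof.
move=> [Lu cu] [Lw cw]; split; first exact: L2_sub.
move=> t tP; have [a ua] := cu t tP; have [b wb] := cw t tP.
by exists (a - b) => x xt; rewrite ua ?wb.
Qed.

Variables ch1 ch2 : Tri -> Tri.
Hypothesis ch_sub1 : forall t, cell (ch1 t) `<=` cell t.
Hypothesis ch_sub2 : forall t, cell (ch2 t) `<=` cell t.

Lemma S0_refines P P' u : refines ch1 ch2 P P' ->
  S0 mu cell P u -> S0 mu cell P' u.
Proof.
move=> PP' [Lu cu]; split=> // a aP'.
have [b bP ab] := refines_cell_sub ch_sub1 ch_sub2 PP' aP'.
by have [c uc] := cu b bP; exists c => x /ab; exact: uc.
Qed.

Hypothesis cell_open : forall t, open (cell t).

Lemma S0_mul_indicC_Gamma_star P P' w :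
  measurable (Gamma_star cell P P') -> disjoint_cells cell P ->
  S0 mu cell P' w ->
  S0 mu cell P (fun x => w x * (1 - \1_(Gamma_star cell P P') x)).
Proof.
move=> mGs dP [Lw cw]; split; first exact: L2_mul_indicC.
move=> t tP; have [tP'|tP'] := boolP (t \in P').
  have [c wc] := cw t tP'; exists c => x xt.
  rewrite wc // indicE memNset ?subr0 ?mulr1 //.
  exact: (cell_Gamma_star_disjoint cell_open dP tP tP' xt).
exists 0 => x xt; rewrite indicE mem_set ?subrr ?mulr0 //.
exact: (cell_sub_Gamma_star cell_open tP tP' x xt).
Qed.

Lemma S0_mul_indic_Gamma_star P P' w : refines ch1 ch2 P P' ->
  measurable (Gamma_star cell P P') -> disjoint_cells cell P ->
  S0 mu cell P' w -> S0 mu cell P' (fun x => w x * \1_(Gamma_star cell P P') x).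
Proof.
move=> PP' mGs dP [Lw cw]; split; first exact: L2_mul_indic.
move=> a aP'; have [b bP ab] := refines_cell_sub ch_sub1 ch_sub2 PP' aP'.
have [bP'|bP'] := boolP (b \in P').
  exists 0 => x /ab xb; rewrite indicE memNset ?mulr0 //.
  exact: (cell_Gamma_star_disjoint cell_open dP bP bP' xb).
have [c wc] := cw a aP'; exists c => x xa.
rewrite wc // indicE mem_set ?mulr1 //.
exact: (cell_sub_Gamma_star cell_open bP bP' x (ab x xa)).
Qed.

End PiecewiseConstant.

Arguments S0_sub {d T R mu Tri cell P u w}.
Arguments S0_refines {d T R mu Tri cell ch1 ch2} _ _ {P P' u}.
Arguments S0_mul_indicC_Gamma_star {d T R mu Tri cell} _ {P P' w}.
Arguments S0_mul_indic_Gamma_star {d T R mu Tri cell ch1 ch2} _ _ _ {P P' w}.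

Theorem lemma3p1
  (* the surface piece Gamma with its topology, sigma-algebra, surface measure *)
  (d : measure_display) (T : topMeasurableType d) (R : realType)
  (mu : {measure set T -> \bar R})
  (open_meas : forall U : set T, open U -> measurable U)
  (* surface triangles (with newest vertex), their point sets, and the two
     children produced by newest vertex bisection *)
  (Tri : eqType) (cell : Tri -> set T) (ch1 ch2 : Tri -> Tri)
  (cell_open : forall t, open (cell t))
  (cell_fin : forall t, (mu (cell t) < +oo)%E)
  (cell_bdry_null : forall t, mu (closure (cell t) `\` cell t) = 0%E)
  (ch_sub1 : forall t, cell (ch1 t) `<=` cell t)
  (ch_sub2 : forall t, cell (ch2 t) `<=` cell t)
  (ch_disj : forall t, cell (ch1 t) `&` cell (ch2 t) = set0)
  (ch_cover : forall t,
      closure (cell (ch1 t)) `|` closure (cell (ch2 t)) = closure (cell t))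
  (* the initial partition *)
  (P0 : seq Tri) (HP0 : is_partition cell P0)
  (* the operator A with constants alpha, beta (t = 0) *)
  (A : (T -> R) -> (T -> R)) (alpha beta : R)
  (Halpha : 0 < alpha) (Hbeta : 0 < beta)
  (A_L2 : forall v, L2 mu v -> L2 mu (A v))
  (A_lin : forall (a : R) (v w : T -> R), L2 mu v -> L2 mu w ->
      aeeq mu (A (fun x => a * v x + w x)) (fun x => a * A v x + A w x))
  (A_ae : forall v w, L2 mu v -> L2 mu w -> aeeq mu v w -> aeeq mu (A v) (A w))
  (A_selfadj : forall v w, L2 mu v -> L2 mu w -> ip mu (A v) w = ip mu v (A w))
  (A_inj : forall v w, L2 mu v -> L2 mu w -> aeeq mu (A v) (A w) -> aeeq mu v w)
  (A_surj : forall g, L2 mu g -> exists2 v, L2 mu v & aeeq mu (A v) g)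
  (A_coer : forall v, L2 mu v -> alpha * normL2 mu setT v ^+ 2 <= ip mu (A v) v)
  (A_bnd : forall v, L2 mu v -> normL2 mu setT (A v) <= beta * normL2 mu setT v)
  (* right-hand side *)
  (f : T -> R) (Hf : L2 mu f)
  (* P, P' in [P0] with P <= P' *)
  (P P' : seq Tri) (HP : refines ch1 ch2 P0 P) (HPP' : refines ch1 ch2 P P')
  (* Galerkin approximations u_P, u_P' *)
  (uP uP' : T -> R)
  (HuP : S0 mu cell P uP)
  (HuP_gal : forall w, S0 mu cell P w -> ip mu (A uP) w = ip mu f w)
  (HuP' : S0 mu cell P' uP')
  (HuP'_gal : forall w, S0 mu cell P' w -> ip mu (A uP') w = ip mu f w)
  (v : T -> R) (Hv : S0 mu cell P' v) :
  let rP := fun x => f x - A uP x in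
  let Gs := Gamma_star cell P P' in
  alpha * normL2 mu setT (fun x => uP x - uP' x) <= normL2 mu Gs rP /\
  normL2 mu Gs rP <=
    beta * normL2 mu setT (fun x => uP x - uP' x)
    + 2 * normL2 mu Gs (fun x => rP x - v x).
Proof.
move=> rP Gs.
have mGs : measurable Gs by apply/open_meas/open_interior.
have dP : disjoint_cells cell P.
  exact: (refines_disjoint_cells ch_sub1 ch_sub2 ch_disj HP (partition_disjoint_cells HP0)).
have LuP := HuP.1; have LuP' := HuP'.1; have Lv := Hv.1.
have LAuP := A_L2 _ LuP; have LAuP' := A_L2 _ LuP'.
have LrP : L2 mu rP := L2_sub mu Hf LAuP.
set e := fun x => uP x - uP' x.
have Se : S0 mu cell P' e := S0_sub (S0_refines ch_sub1 ch_sub2 HPP' HuP) HuP'.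
have Le := Se.1.
have ip_rP w : L2 mu w -> ip mu rP w = ip mu f w - ip mu (A uP) w.
  exact: ip_subl.
have ip_Ae w : S0 mu cell P' w -> ip mu (A e) w = - ip mu rP w.
  move=> Sw; have Lw := Sw.1.
  by rewrite (ip_linear_subl mu A A_L2 A_lin) // HuP'_gal // ip_rP // opprB.
split.
- apply: (coercive_bound mu mGs Halpha LrP Le).
  have galerkin_orth : ip mu rP (fun x => e x * (1 - \1_Gs x)) = 0.
    have Sw := S0_mul_indicC_Gamma_star cell_open mGs dP Se.
    by rewrite ip_rP ?HuP_gal ?subrr //; exact: Sw.1.
  have := A_coer _ Le.
  rewrite ip_Ae // (ip_split_indic mu mGs LrP Le) galerkin_orth addr0.
  by move/le_trans; apply; rewrite -normrN ler_norm.
- apply: (residual_bound mu mGs (mulr_ge0 (ltW Hbeta) (normL2_ge0 mu _ _))) LrP Lv _.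
  have Sw := S0_mul_indic_Gamma_star ch_sub1 ch_sub2 cell_open HPP' mGs dP Hv.
  rewrite -(ip_mul_indic mu) -normrN -ip_Ae // -[normL2 mu Gs v](normL2_mul_indic mu).
  apply: (le_trans (Rintegral_cauchy_schwarz mu measurableT (A_L2 _ Le) Sw.1)).
  by apply: ler_wpM2r; [exact: normL2_ge0|exact: A_bnd].
Qed.
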